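(* Let $\psi:\mathbb{R}_{>0}\to\mathbb{R}_{>0}$ be monotonic with $\psi(h)\to0$, and let $0<\varepsilon<1$. There exist constants $c_1,c_2>0$ (depending only on $\varepsilon$) such that for every open disc $B\subset[\varepsilon,1]^2$ of radius $r<1$ there is $H_0=H_0(B)$ such that for all $(a,b)\in\mathbb{Z}_{\ge0}^2$ with $h_{a,b}\ge H_0$, \[ c_1|B|\frac{\psi(h_{a,b})}{h_{a,b}}\le|\sigma_{a,b}\cap B|\le c_2|B|\frac{\psi(h_{a,b})}{h_{a,b}}. \] Moreover, for such $(a,b)$, every $c\in\mathbb{Z}_{\ge0}$ with $\sigma_{a,b}(c)\cap B\neq\emptyset$ satisfies $\tfrac{\varepsilon}{2}h_{a,b}<c<2h_{a,b}$.
   Context: For $(a,b)\in\mathbb{Z}_{\ge0}^2$, $h_{a,b}=\max(a,b)$. For $c\in\mathbb{Z}_{\ge0}$ define $\sigma_{a,b}(c)=\{(x,y)\in[0,1]^2:|a^2x+b^2y-c^2|<\psi(h_{a,b})\}$ and $\sigma_{a,b}=\bigcup_{c\in\mathbb{Z}_{\ge0}}\sigma_{a,b}(c)$. $|\cdot|$ is Lebesgue measure on $\mathbb{R}^2$. *)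

From HB Require Import structures.
From mathcomp Require Import all_boot all_order all_algebra.
From mathcomp Require Import all_classical all_reals all_analysis.
Set Implicit Arguments. Unset Strict Implicit. Unset Printing Implicit Defensive.
Import Order.TTheory GRing.Theory Num.Theory.
Import numFieldNormedType.Exports.
Local Open Scope classical_set_scope.
Local Open Scope ring_scope.

Definition leb2 (R : realType) : set (R * R) -> \bar R :=
  ((@lebesgue_measure R) \x (@lebesgue_measure R))%E.

Definition hab (a b : nat) : nat := maxn a b.

Definition sigma_c (R : realType) (psi : R -> R) (a b c : nat) : set (R * R) :=
  [set p | 0 <= p.1 <= 1 /\ 0 <= p.2 <= 1 /\
     `|(a ^ 2)%:R * p.1 + (b ^ 2)%:R * p.2 - (c ^ 2)%:R| < psi (hab a b)%:R].

Definition sigma_ab (R : realType) (psi : R -> R) (a b : nat) : set (R * R) :=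
  \bigcup_(c in [set: nat]) sigma_c psi a b c.

Definition disc (R : realType) (x0 y0 r : R) : set (R * R) :=
  [set p | (p.1 - x0) ^+ 2 + (p.2 - y0) ^+ 2 < r ^+ 2].

Definition monotonic_pos (R : realType) (psi : R -> R) : Prop :=
  (forall x y, 0 < x -> x <= y -> psi x <= psi y) \/
  (forall x y, 0 < x -> x <= y -> psi y <= psi x).

From HB Require Import structures.
From mathcomp Require Import all_boot all_order all_algebra.
From mathcomp Require Import all_classical all_reals all_analysis.
From mathcomp Require Import measurable_realfun ring lra.
Set Implicit Arguments. Unset Strict Implicit. Unset Printing Implicit Defensive.
Import Order.TTheory GRing.Theory Num.Theory.
Import numFieldNormedType.Exports.
Local Open Scope classical_set_scope.
Local Open Scope ring_scope.

(* Fix an abscissa x and assume a <= b, so that h = b. For each c, the y-section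
   of sigma_{a,b}(c) is the interval where |a^2 x + b^2 y - c^2| < psi(h), of
   length 2 psi(h) / h^2, and these intervals are disjoint once psi(h) <= 1/4.
   As y runs through a window of length r inside the disc, a^2 x + b^2 y runs
   through an interval of length h^2 r; since consecutive squares there are
   roughly between eps h and 4h apart, between h r / 16 and 7 h r / eps of
   these intervals meet the window. So every x-section of sigma_{a,b} ∩ B has
   measure between r psi(h) / (8 h) and 14 r psi(h) / (eps h), and integrating
   over x (with r^2 <= |B| <= 4 r^2) gives the two-sided bound. *)

Lemma measurable_ltr (d : measure_display) (T : measurableType d) (R : realType)
    (f g : T -> R) :
  measurable_fun setT f -> measurable_fun setT g -> measurable [set x | f x < g x].
Proof.
move=> mf mg.
have := measurable_funB mg mf measurableT (measurable_itv `]0, +oo[).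
by rewrite setTI; congr measurable; apply/seteqP; split => x /=;
  rewrite in_itv /= andbT subr_gt0.
Qed.

Section integral_bounds.
Variables (d : measure_display) (T : measurableType d) (R : realType).
Variables (mu : {measure set T -> \bar R}) (I : set T) (k : R).
Hypotheses (mI : measurable I) (k0 : 0 <= k).

Lemma integral_cst_indic : (\int[mu]_x (k * \1_I x)%:E = k%:E * mu I)%E.
Proof.
rewrite (integralZl_indic _ (fun=> I)) ?integral_indic ?setIT //.
by move=> /lt_geF; rewrite k0.
Qed.

Let measurable_cst_indic :
  measurable_fun setT (fun x => (k * \1_I x)%:E).
Proof.
apply/measurable_EFinP; apply: measurable_funM; first exact: measurable_cst.
exact: measurable_indic.
Qed.

Lemma ge0_integral_ge_on (g : T -> \bar R) :
  measurable_fun setT g -> (forall x, (0 <= g x)%E) ->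
  (forall x, I x -> (k%:E <= g x)%E) ->
  (k%:E * mu I <= \int[mu]_x g x)%E.
Proof.
move=> mg g0 gI; rewrite -integral_cst_indic.
apply: ge0_le_integral => //.
- by move=> x _; rewrite lee_fin mulr_ge0 // indicE.
- move=> x _; rewrite indicE; have [/[!inE] xI|_] := boolP (x \in I).
    by rewrite mulr1; exact: gI.
  by rewrite mulr0.
Qed.

Lemma ge0_integral_le_on (g : T -> \bar R) :
  measurable_fun setT g -> (forall x, (0 <= g x)%E) ->
  (forall x, I x -> (g x <= k%:E)%E) -> (forall x, ~ I x -> g x = 0%E) ->
  (\int[mu]_x g x <= k%:E * mu I)%E.
Proof.
move=> mg g0 gI gNI; rewrite -integral_cst_indic.
apply: ge0_le_integral => //.
move=> x _; rewrite indicE.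
have [/[!inE] xI|/negP/[!inE] xNI] := boolP (x \in I).
  by rewrite mulr1; exact: gI.
by rewrite mulr0 gNI.
Qed.

End integral_bounds.

Section plane.
Variable R : realType.
Local Notation plane := (measurableTypeR R * measurableTypeR R)%type.
Local Notation lambda := (@lebesgue_measure R).

Let measurable_fst0 : measurable_fun setT (fun p : plane => p.1).
Proof. exact: measurable_fst. Qed.

Let measurable_snd0 : measurable_fun setT (fun p : plane => p.2).
Proof. exact: measurable_snd. Qed.

Lemma measurable_sigma_c (psi : R -> R) (a b c : nat) :
  measurable (sigma_c psi a b c : set plane).
Proof.
set F := fun p : plane => (a ^ 2)%:R * p.1 + (b ^ 2)%:R * p.2 - (c ^ 2)%:R.
set s := psi (hab a b)%:R.
have mF : measurable_fun setT F.
  apply: measurable_funB; last exact: measurable_cst.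
  by apply: measurable_funD; apply: measurable_funM => //; exact: measurable_cst.
have -> : sigma_c psi a b c = fst @^-1` `[0, 1] `&`
    (snd @^-1` `[0, 1] `&` F @^-1` `]- s, s[).
  by apply/seteqP; split => p; rewrite /sigma_c /= !in_itv /= ltr_norml.
have mpre (f : plane -> R) Y :
    measurable_fun setT f -> measurable Y -> measurable (f @^-1` Y).
  by move=> mf mY; rewrite -[X in measurable X]setTI; exact: mf.
by apply: measurableI; last apply: measurableI; apply: mpre => //;
  exact: measurable_itv.
Qed.

Lemma measurable_disc (x0 y0 r : R) : measurable (disc x0 y0 r : set plane).
Proof.
apply: measurable_ltr; last exact: measurable_cst.
apply: measurable_funD; apply: measurable_funX; apply: measurable_funB => //;
  exact: measurable_cst.
Qed.

Lemma measurable_sigma_ab_disc (psi : R -> R) (a b : nat) (x0 y0 r : R) :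
  measurable (sigma_ab psi a b `&` disc x0 y0 r : set plane).
Proof.
apply: measurableI; last exact: measurable_disc.
by apply: bigcupT_measurable => c; exact: measurable_sigma_c.
Qed.

Lemma leb2_xsection (A : set plane) :
  leb2 A = (\int[lambda]_x lambda (xsection A x))%E.
Proof. by []. Qed.

Lemma leb2_swap (A : set plane) :
  measurable A -> leb2 A = leb2 [set p | A (p.2, p.1)].
Proof.
move=> mA; rewrite /leb2.
rewrite (@product_measure_unique _ _ _ _ R lambda lambda
  (lambda \x^ lambda)%E _ A mA); last first.
  by move=> X Y mX mY; rewrite [LHS]product_measure2E.
rewrite /product_measure2 /product_measure1; apply: eq_integral => y _ /=.
congr (lambda _); apply/seteqP; split => x /=;
  by rewrite /xsection /ysection /= !in_setE.
Qed.

Lemma lebesgue_measure_itv_oo (u v : R) : u <= v -> lambda `]u, v[ = (v - u)%:E.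
Proof.
rewrite le_eqVlt => /predU1P[<-|uv]; last by rewrite lebesgue_measure_itv /= lte_fin uv -EFinD.
by rewrite set_itvoo0 ?measure0 ?subrr.
Qed.

Lemma leb2_setX_itv (u v w z : R) : u <= v -> w <= z ->
  leb2 (`]u, v[ `*` `]w, z[) = ((v - u) * (z - w))%:E.
Proof.
move=> uv wz; rewrite /leb2 product_measure1E //.
by rewrite EFinM; congr (_ * _)%E; exact: lebesgue_measure_itv_oo.
Qed.

Lemma disc_sub_square (x0 y0 r : R) : 0 <= r ->
  disc x0 y0 r `<=` `]x0 - r, x0 + r[ `*` `]y0 - r, y0 + r[.
Proof.
move=> r0 [x y]; rewrite /disc /= !in_itv /= => D.
have := sqr_ge0 (x - x0); have := sqr_ge0 (y - y0).
rewrite !expr2 in D * => h1 h2.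
split; apply/andP; split; nra.
Qed.

Lemma square_sub_disc (x0 y0 r : R) : 0 < r ->
  `]x0 - r / 2, x0 + r / 2[ `*` `]y0 - r / 2, y0 + r / 2[ `<=` disc x0 y0 r.
Proof.
move=> r0 [x y] /= [] /=; rewrite !in_itv /= => /andP[h1 h2] /andP[h3 h4].
rewrite /disc /= !expr2; nra.
Qed.

Lemma leb2_disc_le (x0 y0 r : R) : 0 < r ->
  (leb2 (disc x0 y0 r) <= (4 * r ^+ 2)%:E)%E.
Proof.
move=> r0.
apply: (@le_trans _ _ (leb2 (`]x0 - r, x0 + r[ `*` `]y0 - r, y0 + r[))).
  apply: le_measure; rewrite ?inE; [exact: measurable_disc| |].
  - by apply: measurableX; exact: measurable_itv.
  - exact/disc_sub_square/ltW.
by rewrite leb2_setX_itv ?lee_fin; [rewrite !expr2; nra|lra|lra].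
Qed.

Lemma leb2_disc_ge (x0 y0 r : R) : 0 < r ->
  ((r ^+ 2)%:E <= leb2 (disc x0 y0 r))%E.
Proof.
move=> r0.
apply: (@le_trans _ _
  (leb2 (`]x0 - r / 2, x0 + r / 2[ `*` `]y0 - r / 2, y0 + r / 2[))).
  by rewrite leb2_setX_itv ?lee_fin; [rewrite !expr2; nra|lra|lra].
apply: le_measure; rewrite ?inE; [|exact: measurable_disc|exact: square_sub_disc].
by apply: measurableX; exact: measurable_itv.
Qed.

Lemma disc_center_row (x0 y0 r x : R) :
  x0 - r < x < x0 + r -> disc x0 y0 r (x, y0).
Proof.
by move=> /andP[? ?]; rewrite /disc /= subrr expr0n /= addr0 !expr2; nra.
Qed.

Lemma disc_sub_box_y (eps x0 y0 r : R) : 0 < r ->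
  disc x0 y0 r `<=` [set p | eps <= p.1 <= 1 /\ eps <= p.2 <= 1] ->
  eps <= y0 - r /\ y0 + r <= 1.
Proof.
move=> r0 sub.
have column t : - r < t < r -> eps <= y0 + t <= 1.
  move=> /andP[? ?]; suff /sub[_ //] : disc x0 y0 r (x0, y0 + t).
  by rewrite /disc /= subrr expr0n /= add0r addrAC subrr add0r !expr2; nra.
split; apply/ler_addgt0Pr => e e0; have [er|re] := lerP e r.
- by have /andP[] := column (e - r) ltac:(lra); lra.
- by have /andP[] := column 0 ltac:(lra); lra.
- by have /andP[] := column (r - e) ltac:(lra); lra.
- by have /andP[] := column 0 ltac:(lra); lra.
Qed.

Lemma disc_swap (x0 y0 r : R) :
  [set p | disc x0 y0 r (p.2, p.1)] = disc y0 x0 r.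
Proof. by apply/seteqP; split => -[x y]; rewrite /disc /= addrC. Qed.

Lemma sigma_ab_disc_swap (psi : R -> R) (a b : nat) (x0 y0 r : R) :
  [set p : plane | (sigma_ab psi a b `&` disc x0 y0 r) (p.2, p.1)] =
  sigma_ab psi b a `&` disc y0 x0 r.
Proof.
rewrite -disc_swap; apply/seteqP; split => -[x y] /= [[c _ [h1 [h2 h3]]] D];
  split => //; exists c => //; do 2!split => //;
  by rewrite /hab maxnC [X in `|X - _|]addrC.
Qed.

End plane.

Section strips.
Variable R : realType.
Local Notation lambda := (@lebesgue_measure R).

(* With al = a^2 x and be = b^2 this is the y-section at x of sigma_{a,b}(c). *)
Definition strip (p al be : R) (c : nat) : set R :=
  `]((c ^ 2)%:R - p - al) / be, ((c ^ 2)%:R + p - al) / be[.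

Lemma in_strip (p al be y : R) (c : nat) : 0 < be ->
  strip p al be c y <-> `|al + be * y - (c ^ 2)%:R| < p.
Proof.
move=> be0; rewrite /strip /= in_itv /= ltr_pdivrMr // ltr_pdivlMr //.
rewrite ltr_norml; split => /andP[? ?]; apply/andP; split; lra.
Qed.

Lemma strip_sub_itv (p al be u v : R) (c : nat) : 0 < be ->
  be * u + al + p <= (c ^ 2)%:R -> (c ^ 2)%:R + p <= be * v + al ->
  strip p al be c `<=` `]u, v[.
Proof.
move=> be0 uc cv y /(in_strip _ _ _ _ be0); rewrite ltr_norml => /andP[? ?].
by rewrite /= in_itv /=; apply/andP; split; rewrite -(ltr_pM2l be0); lra.
Qed.

Lemma lebesgue_measure_strips (p al be : R) (m K : nat) :
  0 < be -> 0 < p -> p <= 1 / 2 ->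
  lambda (\big[setU/set0]_(k < K) strip p al be (m + k)) =
  (K%:R * (2 * p / be))%:E.
Proof.
move=> be0 p0 p1.
have disj i j y : (i < j)%N ->
    strip p al be (m + i) y -> strip p al be (m + j) y -> False.
  move=> ij /(in_strip _ _ _ _ be0) + /(in_strip _ _ _ _ be0).
  have : (((m + i) ^ 2).+1 <= (m + j) ^ 2)%N by rewrite ltn_exp2r // ltn_add2l.
  rewrite -(ler_nat R) -natr1 !ltr_norml => ? /andP[? ?] /andP[? ?]; lra.
have triv : trivIset `I_K (fun k => strip p al be (m + k)).
  move=> i j _ _ [y [Si Sj]].
  by case: (ltngtP i j) => // ij; [case: (disj _ _ _ ij Si Sj)|case: (disj _ _ _ ij Sj Si)].
rewrite (@measure_semi_additive_ord_I _ _ _ lambda (fun k => strip p al be (m + k))) //.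
- rewrite (eq_bigr (fun=> (2 * p / be)%:E)); last first.
    move=> k _; change (lambda (strip p al be (m + k)) = (2 * p / be)%:E).
    rewrite lebesgue_measure_itv_oo; first by congr EFin; field; lra.
    by rewrite ler_pM2r ?invr_gt0 //; lra.
  by rewrite sumEFin big_const_ord iter_addr addr0 [in RHS]mulr_natl.
- by move=> k _; exact: measurable_itv.
- by apply: bigsetU_measurable => k _; exact: measurable_itv.
Qed.

End strips.

Section integer_squares.
Variable R : realType.

Lemma truncn_sqrt_lt_le (v w : R) (c : nat) : 0 <= v ->
  v < c%:R ^+ 2 -> c%:R ^+ 2 < w ->
  (Num.truncn (Num.sqrt v) < c <= Num.truncn (Num.sqrt w))%N.
Proof.
move=> v0 vc cw; have w0 : 0 <= w by apply: le_trans (ltW cw); exact: sqr_ge0.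
rewrite truncn_lt_nat ?sqrtr_ge0 // truncn_ge_nat ?sqrtr_ge0 //.
rewrite -(ltr_sqr (sqrtr_ge0 v)) ?nnegrE // -(ler_sqr (ler0n _ c)) ?nnegrE ?sqrtr_ge0 //.
by rewrite !sqr_sqrtr // vc ltW.
Qed.

Lemma natr_truncn_subn_lt (x y : R) : 0 <= x <= y ->
  ((Num.truncn y - Num.truncn x)%N)%:R < y - x + 1.
Proof.
move=> /andP[x0 xy]; have y0 : 0 <= y := le_trans x0 xy.
have := truncn_le y; rewrite y0 => ty.
have : x < (Num.truncn x).+1%:R by rewrite -truncn_lt_nat.
have [lexy|ltyx] := leqP (Num.truncn x) (Num.truncn y).
  by rewrite natrB // -natr1; lra.
by move/ltnW: ltyx; rewrite -subn_eq0 => /eqP ->; lra.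
Qed.

Lemma sqr_in_itv_run (v w : R) : 0 <= v -> v <= w ->
  exists n K : nat, K%:R < Num.sqrt w - Num.sqrt v + 1 /\
    forall c : nat, v < c%:R ^+ 2 -> c%:R ^+ 2 < w -> exists2 k, (k < K)%N & c = (n + k)%N.
Proof.
move=> v0 vw; set n := Num.truncn (Num.sqrt v).
exists n.+1, (Num.truncn (Num.sqrt w) - n)%N; split.
  by apply: natr_truncn_subn_lt; rewrite sqrtr_ge0 ler_sqrt // (le_trans v0 vw).
move=> c vc cw; have /andP[nc cN] := truncn_sqrt_lt_le v0 vc cw.
exists (c - n.+1)%N; last by rewrite subnKC.
by rewrite subnS prednK ?subn_gt0 // leq_sub2r.
Qed.

Lemma sqrtr_sub_le (v w s : R) : 0 < s -> s ^+ 2 <= v -> v <= w ->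
  Num.sqrt w - Num.sqrt v <= (w - v) / s.
Proof.
move=> s0 sv vw; have v0 : 0 <= v by apply: le_trans sv; exact: sqr_ge0.
have sq0 := sqrtr_ge0 v; have sqw0 := sqrtr_ge0 w.
have ssv : s <= Num.sqrt v by rewrite -(ler_sqr (ltW s0)) ?nnegrE // sqr_sqrtr.
have vw' : Num.sqrt v <= Num.sqrt w by rewrite ler_sqrt // (le_trans v0 vw).
have -> : w - v = (Num.sqrt w - Num.sqrt v) * (Num.sqrt w + Num.sqrt v).
  by rewrite -subr_sqr !sqr_sqrtr // (le_trans v0 vw).
by rewrite ler_pdivlMr // ler_wpM2l ?subr_ge0 //; lra.
Qed.

Lemma consecutive_sqr_window (lo p h r : R) :
  0 <= lo -> 0 < p -> p <= 1 / 4 -> lo + p <= 4 * h ^+ 2 ->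
  0 < r -> r < 1 -> 16 <= h * r ->
  exists m : nat, forall k, (k < Num.truncn (h * r / 8))%N ->
    lo + p <= ((m + k) ^ 2)%:R /\ ((m + k) ^ 2)%:R + p <= lo + h ^+ 2 * r.
Proof.
move=> lo0 p0 p1 lo4 r0 r1 hr; have h16 : 16 <= h by nra.
set S := Num.sqrt (lo + p); have S0 : 0 <= S := sqrtr_ge0 _.
have S2 : S ^+ 2 = lo + p by rewrite sqr_sqrtr //; lra.
have S2h : S <= 2 * h.
  rewrite -(ler_sqr S0) ?nnegrE; last lra.
  by rewrite S2 (_ : (2 * h) ^+ 2 = 4 * h ^+ 2) //; ring.
exists (Num.truncn S).+1 => k; set K := Num.truncn _ => kK.
have mS : S < (Num.truncn S).+1%:R by rewrite -truncn_lt_nat.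
have mS1 : (Num.truncn S).+1%:R <= S + 1 by rewrite -natr1 lerD2r truncn_le.
have KS : K%:R <= h * r / 8 by rewrite truncn_le; lra.
set c := (_ + k)%N; have cS : S < c%:R.
  by apply: lt_le_trans mS _; rewrite ler_nat leq_addr.
have cSK : c%:R <= S + K%:R by move: kK; rewrite -(ler_nat R) -natr1 natrD; lra.
have t0 : 0 <= c%:R - S by lra.
have tK : c%:R - S <= h * r / 8 by lra.
have tt : (c%:R - S) ^+ 2 <= h ^+ 2 * r / 64.
  apply: le_trans (_ : (h * r / 8) ^+ 2 <= _); first by rewrite ler_sqr ?nnegrE //; lra.
  rewrite (_ : (h * r / 8) ^+ 2 = h ^+ 2 * r / 64 * r); last by rewrite !expr2; field.
  rewrite -[leRHS]mulr1; apply: ler_wpM2l; last lra.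
  by rewrite !mulr_ge0 ?sqr_ge0 //; lra.
have St : S * (c%:R - S) <= 2 * h * (h * r / 8) by rewrite ler_pM.
have : 16 * 16 <= h * (h * r) by rewrite ler_pM.
have : S ^+ 2 < c%:R ^+ 2 by rewrite ltr_sqr ?nnegrE; lra.
have -> : c%:R ^+ 2 = S ^+ 2 + 2 * (S * (c%:R - S)) + (c%:R - S) ^+ 2 by ring.
rewrite natrX -S2 !expr2 in St *; lra.
Qed.

End integer_squares.

(* By symmetry (leb2_swap) we may assume a <= b, so that h_{a,b} = b. *)
Section xsections.
Variables (R : realType) (psi : R -> R) (a b : nat) (eps x0 y0 r : R).
Local Notation lambda := (@lebesgue_measure R).
Local Notation p := (psi (hab a b)%:R).
Local Notation h := (GRing.natmul (@GRing.one R) b).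
Local Notation be := (GRing.natmul (@GRing.one R) (b ^ 2)).
Local Notation al x := ((a ^ 2)%:R * x).
Local Notation A := (sigma_ab psi a b `&` disc x0 y0 r).
Hypotheses (ab : (a <= b)%N) (eps_gt0 : 0 < eps) (r_gt0 : 0 < r) (r_lt1 : r < 1).
Hypothesis disc_box : disc x0 y0 r `<=` [set q | eps <= q.1 <= 1 /\ eps <= q.2 <= 1].
Hypotheses (p_gt0 : 0 < p) (p_le : p <= 1 / 4) (hr : 16 <= h * r) (heps : 1 <= h * eps).

Let h_ge1 : 1 <= h. Proof. by move: hr r_lt1 r_gt0; nra. Qed.
Let beE : be = h ^+ 2. Proof. exact: natrX. Qed.
Let be_gt0 : 0 < be. Proof. by rewrite beE exprn_gt0 // (lt_le_trans ltr01). Qed.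

Let al_ge0 (x : R) : 0 <= x -> 0 <= al x.
Proof. by move=> x_ge0; rewrite mulr_ge0. Qed.

Let al_le (x : R) : x <= 1 -> al x <= h ^+ 2.
Proof.
move=> x1; rewrite natrX.
have ah : (a%:R : R) ^+ 2 <= h ^+ 2 by rewrite ler_sqr ?nnegrE ?ler_nat.
by apply: le_trans ah; rewrite ler_piMr ?sqr_ge0.
Qed.

Lemma xsectionP (x y : R) : xsection A x y <->
  disc x0 y0 r (x, y) /\ exists c, strip p (al x) be c y.
Proof.
rewrite /xsection /= in_setE /=; split.
  by move=> [[c _ [_ [_ pc]]] D]; split => //; exists c; apply/in_strip.
move=> [D [c /(in_strip _ _ _ _ be_gt0) pc]]; split => //; exists c => //.
have [/= /andP[? ?] /andP[? ?]] := disc_box D; have e0 := eps_gt0.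
by rewrite /sigma_c /=; split; [|split] => //; apply/andP; split; lra.
Qed.

Lemma xsection_eq0 (x : R) : ~ (x0 - r < x < x0 + r) -> xsection A x = set0.
Proof.
move=> nx; apply/seteqP; split => // y /xsectionP[D _]; apply: nx.
by have [/= + _] := disc_sub_square (ltW r_gt0) D; rewrite in_itv.
Qed.

Lemma strip_sub_xsection (x : R) (c : nat) : x0 - r / 2 < x < x0 + r / 2 ->
  strip p (al x) be c `<=` `]y0 - r / 2, y0 + r / 2[ ->
  strip p (al x) be c `<=` xsection A x.
Proof.
move=> /andP[xl xr] win y Sy; apply/xsectionP; split; last by exists c.
apply: (square_sub_disc r_gt0); split; last exact: win.
by rewrite /= in_itv /= xl xr.
Qed.

Lemma lebesgue_xsection_ge (x : R) : x0 - r / 2 < x < x0 + r / 2 ->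
  ((r * p / (8 * h))%:E <= lambda (xsection A x))%E.
Proof.
move=> xI; have /andP[xl xr] := xI.
have r0 := r_gt0; have r1 := r_lt1; have h_r := hr; have h1 := h_ge1.
have p0 := p_gt0; have p1 := p_le; have e0 := eps_gt0.
have [ey_lo ey_hi] := disc_sub_box_y r_gt0 disc_box.
have /disc_box[/= /andP[ex x1] _] : disc x0 y0 r (x, y0).
  by apply: disc_center_row; apply/andP; split; lra.
have al0 := al_ge0 (ltW (lt_le_trans e0 ex)); have alh := al_le x1.
set lo := al x + h ^+ 2 * (y0 - r / 2).
have lo0 : 0 <= lo by rewrite addr_ge0 // mulr_ge0 ?sqr_ge0 //; lra.
have lo4 : lo + p <= 4 * h ^+ 2.
  have : h ^+ 2 * (y0 - r / 2) <= h ^+ 2 by rewrite ler_piMr ?sqr_ge0 //; lra.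
  have : 1 <= h ^+ 2 by rewrite expr2; nra.
  by rewrite /lo; lra.
have [m win] := consecutive_sqr_window lo0 p0 p1 lo4 r0 r1 h_r.
set K := Num.truncn (h * r / 8) in win.
have sub : \big[setU/set0]_(k < K) strip p (al x) be (m + k) `<=` xsection A x.
  rewrite -(bigcup_mkord K (fun k => strip p (al x) be (m + k))) => y [k /= kK].
  apply: strip_sub_xsection => //; have [c_lo c_hi] := win k kK.
  by rewrite /lo in c_lo c_hi; apply: strip_sub_itv; rewrite ?beE //; lra.
apply: (@le_trans _ _ (lambda (\big[setU/set0]_(k < K) strip p (al x) be (m + k)))).
  rewrite lebesgue_measure_strips // ?lee_fin; last lra.
  have : h * r / 8 < K%:R + 1 by rewrite natr1 -truncn_lt_nat //; lra.
  rewrite beE -subr_ge0 => K1.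
  have -> : K%:R * (2 * p / h ^+ 2) - r * p / (8 * h) =
            p / (8 * h ^+ 2) * (16 * K%:R - h * r) by field; lra.
  by apply: mulr_ge0; [apply: divr_ge0; rewrite ?expr2; nra|lra].
apply: le_measure; rewrite ?inE; last exact: sub.
- by apply: bigsetU_measurable => k _; exact: measurable_itv.
- by apply: measurable_xsection; exact: measurable_sigma_ab_disc.
Qed.

Lemma xsection_sub_strips (x : R) : x0 - r < x < x0 + r ->
  exists2 K : nat, K%:R <= 7 * h * r / eps &
    exists n, xsection A x `<=` \big[setU/set0]_(k < K) strip p (al x) be (n + k).
Proof.
move=> xI; have r0 := r_gt0; have h1 := h_ge1; have h_r := hr; have he := heps.
have e0 := eps_gt0; have p0 := p_gt0; have p1 := p_le.
have [ey_lo ey_hi] := disc_sub_box_y r_gt0 disc_box.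
have /disc_box[/= /andP[ex x1] _] := disc_center_row y0 xI.
have al0 := al_ge0 (ltW (lt_le_trans e0 ex)).
have hhe : 1 <= h ^+ 2 * eps by rewrite expr2; nra.
set v := al x + h ^+ 2 * (y0 - r) - p.
set w := al x + h ^+ 2 * (y0 + r) + p.
have v_ge : h ^+ 2 * eps / 2 <= v.
  have : h ^+ 2 * eps <= h ^+ 2 * (y0 - r) by rewrite ler_pM2l ?exprn_gt0 //; lra.
  by rewrite /v; lra.
have vw : v <= w by rewrite /v /w; have := sqr_ge0 h; nra.
(* a strip meeting ]y0 - r, y0 + r[ has c^2 in ]v, w[ *)
have [n [K [K_lt run]]] := sqr_in_itv_run (ltac:(lra) : 0 <= v) vw.
exists K; last exists n.
  have gap : Num.sqrt w - Num.sqrt v <= (w - v) / (eps * h / 2).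
    apply: sqrtr_sub_le => //; first by rewrite !mulr_gt0 //; lra.
    apply: le_trans v_ge.
    rewrite (_ : (eps * h / 2) ^+ 2 = eps * (h ^+ 2 * eps) / 4); last by rewrite !expr2; field.
    have : eps * (h ^+ 2 * eps) <= 1 * (h ^+ 2 * eps) by apply: ler_wpM2r; lra.
    lra.
  have : 1 <= h * r / eps by rewrite ler_pdivlMr //; lra.
  suff : (w - v) / (eps * h / 2) <= 6 * h * r / eps by lra.
  rewrite ler_pdivrMr; last by rewrite !mulr_gt0 //; lra.
  have -> : 6 * h * r / eps * (eps * h / 2) = 3 * (h ^+ 2 * r) by field; lra.
  have : 1 <= h ^+ 2 * r by rewrite expr2; nra.
  by rewrite /v /w; lra.
move=> y /xsectionP[D [c /(in_strip _ _ _ _ be_gt0) Sc]].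
have /andP[? ?] : - p < al x + h ^+ 2 * y - (c ^ 2)%:R < p by rewrite -beE -ltr_norml.
have [_ /=] := disc_sub_square (ltW r0) D; rewrite in_itv /= => /andP[yl yr].
have [k kK cE] : exists2 k, (k < K)%N & c = (n + k)%N.
  apply: run; rewrite -natrX.
  + have : h ^+ 2 * (y0 - r) < h ^+ 2 * y by rewrite ltr_pM2l ?exprn_gt0 //; lra.
    by rewrite /v; lra.
  + have : h ^+ 2 * y < h ^+ 2 * (y0 + r) by rewrite ltr_pM2l ?exprn_gt0 //; lra.
    by rewrite /w; lra.
rewrite -(bigcup_mkord K (fun k => strip p (al x) be (n + k))).
by exists k => //; rewrite -cE; apply/(in_strip _ _ _ _ be_gt0).
Qed.

Lemma lebesgue_xsection_le (x : R) : x0 - r < x < x0 + r ->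
  (lambda (xsection A x) <= (14 * r * p / (eps * h))%:E)%E.
Proof.
move=> /xsection_sub_strips[K K_le [n cover]].
have r0 := r_gt0; have h1 := h_ge1; have e0 := eps_gt0; have p0 := p_gt0.
apply: (@le_trans _ _ (lambda (\big[setU/set0]_(k < K) strip p (al x) be (n + k)))).
  apply: le_measure; rewrite ?inE; last exact: cover.
  - by apply: measurable_xsection; exact: measurable_sigma_ab_disc.
  - by apply: bigsetU_measurable => k _; exact: measurable_itv.
rewrite lebesgue_measure_strips // ?lee_fin; last by have := p_le; lra.
have -> : 14 * r * p / (eps * h) = (7 * h * r / eps) * (2 * p / be).
  by rewrite beE; field; do ?[apply/andP; split]; lra.
by apply: ler_wpM2r; first by rewrite divr_ge0 ?ler0n //; lra.
Qed.

Lemma leb2_sigma_ab_disc_bounds :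
  ((r ^+ 2 * p / (8 * h))%:E <= leb2 A)%E /\
  (leb2 A <= (28 * r ^+ 2 * p / (eps * h))%:E)%E.
Proof.
have r0 := r_gt0; have h1 := h_ge1; have p0 := p_gt0; have e0 := eps_gt0.
have mg := measurable_fun_xsection lambda (measurable_sigma_ab_disc psi a b x0 y0 r).
have g0 x : (0 <= lambda (xsection A x))%E by exact: measure_ge0.
rewrite leb2_xsection; split.
  apply: le_trans (ge0_integral_ge_on (k := r * p / (8 * h)) lambda
    (measurable_itv `]x0 - r / 2, x0 + r / 2[) _ mg g0 _).
  -
    rewrite -[X in (_ <= _ * X)%E]/(lambda `]x0 - r / 2, x0 + r / 2[).
    rewrite lebesgue_measure_itv_oo -?EFinM ?lee_fin; last lra.
    by rewrite [leRHS](_ : _ = r ^+ 2 * p / (8 * h)) // expr2; field; lra.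
  - by rewrite divr_ge0 ?mulr_ge0 //; lra.
  - by move=> x; rewrite /= in_itv /=; exact: lebesgue_xsection_ge.
apply: le_trans (ge0_integral_le_on (k := 14 * r * p / (eps * h)) lambda
  (measurable_itv `]x0 - r, x0 + r[) _ mg g0 _ _) _.
- by rewrite divr_ge0 ?mulr_ge0 //; lra.
- by move=> x; rewrite /= in_itv /=; exact: lebesgue_xsection_le.
- by move=> x; rewrite /= in_itv /= => /xsection_eq0 ->; rewrite measure0.
rewrite -[X in (_ * X <= _)%E]/(lambda `]x0 - r, x0 + r[).
rewrite lebesgue_measure_itv_oo -?EFinM ?lee_fin; last lra.
by rewrite [leLHS](_ : _ = 28 * r ^+ 2 * p / (eps * h)) // expr2; field; lra.
Qed.

End xsections.

Lemma hab_sqr_bounds (a b : nat) :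
  (hab a b ^ 2 <= a ^ 2 + b ^ 2 <= 2 * hab a b ^ 2)%N.
Proof.
rewrite /hab mul2n -addnn; case: (leqP a b) => [ab|/ltnW ba].
  by rewrite leq_add2r leq_exp2r // ab andbT leq_addl.
by rewrite leq_add2l leq_exp2r // ba andbT leq_addr.
Qed.

Lemma sigma_c_disc_index_bounds (R : realType) (psi : R -> R) (a b c : nat)
    (eps x0 y0 r : R) :
  0 < eps -> eps < 1 ->
  disc x0 y0 r `<=` [set q | eps <= q.1 <= 1 /\ eps <= q.2 <= 1] ->
  psi (hab a b)%:R <= 1 / 4 -> 1 <= (hab a b)%:R * eps ->
  sigma_c psi a b c `&` disc x0 y0 r !=set0 ->
  eps / 2 * (hab a b)%:R < c%:R /\ (c%:R : R) < 2 * (hab a b)%:R.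
Proof.
move=> e0 e1 sub p1 he [[z1 z2] [[_ [_ Hc]] /sub[/= /andP[ez1 z1le] /andP[ez2 z2le]]]].
move: Hc p1 he; set p := psi _; set h : R := (hab a b)%:R => Hc p1 he.
have h1 : 1 <= h by nra.
set A : R := (a ^ 2)%:R in Hc *; set B : R := (b ^ 2)%:R in Hc *.
have [hs sh] : h ^+ 2 <= A + B /\ A + B <= 2 * h ^+ 2.
  have /andP[] := hab_sqr_bounds a b.
  by rewrite -!(ler_nat R) natrD natrM (natrX _ (hab a b)).
have A0 : 0 <= A := ler0n _ _; have B0 : 0 <= B := ler0n _ _.
have lo : eps * h ^+ 2 <= A * z1 + B * z2.
  have : A * eps <= A * z1 by rewrite ler_wpM2l.
  have : B * eps <= B * z2 by rewrite ler_wpM2l.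
  nra.
have hi : A * z1 + B * z2 <= 2 * h ^+ 2.
  have : A * z1 <= A by rewrite ler_piMr.
  have : B * z2 <= B by rewrite ler_piMr.
  lra.
move: Hc; rewrite /= ltr_norml natrX => /andP[c_lo c_hi].
have hhe : 1 <= eps * h ^+ 2 by rewrite expr2; nra.
split.
- rewrite -(ltr_sqr (x := eps / 2 * h)) ?nnegrE ?ler0n ?mulr_ge0 //; try lra.
  have -> : (eps / 2 * h) ^+ 2 = eps * (eps * h ^+ 2) / 4 by field.
  have : eps * (eps * h ^+ 2) <= eps * h ^+ 2 by rewrite ler_piMl; lra.
  lra.
- rewrite -(ltr_sqr (y := 2 * h)) ?nnegrE ?ler0n //; last lra.
  have -> : (2 * h) ^+ 2 = 4 * h ^+ 2 by ring.
  lra.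
Qed.

Lemma leb2_sigma_ab_disc_hab (R : realType) (psi : R -> R) (a b : nat)
    (eps x0 y0 r : R) :
  0 < eps -> 0 < r -> r < 1 ->
  disc x0 y0 r `<=` [set q | eps <= q.1 <= 1 /\ eps <= q.2 <= 1] ->
  0 < psi (hab a b)%:R -> psi (hab a b)%:R <= 1 / 4 ->
  16 <= (hab a b)%:R * r -> 1 <= (hab a b)%:R * eps ->
  ((r ^+ 2 * psi (hab a b)%:R / (8 * (hab a b)%:R))%:E
     <= leb2 (sigma_ab psi a b `&` disc x0 y0 r))%E /\
  (leb2 (sigma_ab psi a b `&` disc x0 y0 r)
     <= (28 * r ^+ 2 * psi (hab a b)%:R / (eps * (hab a b)%:R))%:E)%E.
Proof.
move=> e0 r0 r1; wlog ab : a b x0 y0 / (a <= b)%N => [wlog_ab sub|sub].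
  have [ab|/ltnW ba] := leqP a b; first exact: wlog_ab.
  rewrite leb2_swap ?sigma_ab_disc_swap; last exact: measurable_sigma_ab_disc.
  rewrite (_ : hab a b = hab b a); last by rewrite /hab maxnC.
  apply: (wlog_ab b a y0 x0 ba) => -[x y].
  by rewrite -disc_swap => /sub[? ?].
set p := psi _; rewrite (maxn_idPr ab : hab a b = b) => p0 p1 hr he.
exact: leb2_sigma_ab_disc_bounds.
Qed.

Lemma leb2_sigma_ab_disc_comparable (R : realType) (psi : R -> R) (a b : nat)
    (eps x0 y0 r : R) :
  0 < eps -> 0 < r -> r < 1 ->
  disc x0 y0 r `<=` [set q | eps <= q.1 <= 1 /\ eps <= q.2 <= 1] ->
  let h := (hab a b)%:R : R in
  0 < psi h -> psi h <= 1 / 4 -> 16 <= h * r -> 1 <= h * eps ->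
  ((1 / 32 * psi h / h)%:E * leb2 (disc x0 y0 r)
     <= leb2 (sigma_ab psi a b `&` disc x0 y0 r))%E /\
  (leb2 (sigma_ab psi a b `&` disc x0 y0 r)
     <= (28 / eps * psi h / h)%:E * leb2 (disc x0 y0 r))%E.
Proof.
move=> e0 r0 r1 sub h p0 p1 hr he.
have [lb ub] := leb2_sigma_ab_disc_hab e0 r0 r1 sub p0 p1 hr he.
have h0 : 0 < h by rewrite -(pmulr_lgt0 _ r0); lra.
split.
- apply: le_trans lb.
  apply: le_trans (lee_wpmul2l _ (leb2_disc_le x0 y0 r0)) _.
    by rewrite lee_fin !mulr_ge0 ?invr_ge0 //; lra.
  by rewrite -EFinM lee_fin [leLHS](_ : _ = r ^+ 2 * psi h / (8 * h)) //; field; lra.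
- apply: le_trans ub _.
  apply: le_trans _ (lee_wpmul2l _ (leb2_disc_ge x0 y0 r0)); last first.
    by rewrite lee_fin !mulr_ge0 ?invr_ge0 //; lra.
  by rewrite -EFinM lee_fin [leRHS](_ : _ = 28 * r ^+ 2 * psi h / (eps * h)) //;
    field; rewrite ?gt_eqF.
Qed.

Lemma threshold_lt (R : realFieldType) (M r eps h : R) : 0 < r -> 0 < eps ->
  `|M| + 16 / r + 1 / eps < h -> [/\ M < h, 16 < h * r & 1 < h * eps].
Proof.
move=> r0 e0 Qh; have := ler_norm M; have := normr_ge0 M.
have : 0 <= 16 / r by rewrite divr_ge0 //; lra.
have : 0 <= 1 / eps by rewrite divr_ge0 //; lra.
by move=> *; split; rewrite -?ltr_pdivrMr //; lra.
Qed.

Theorem mainTheorem4 (R : realType)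
  (eps : R) (eps_gt0 : 0 < eps) (eps_lt1 : eps < 1) :
  exists c1 c2 : R, 0 < c1 /\ 0 < c2 /\
    forall psi : R -> R,
    (forall x, 0 < x -> 0 < psi x) ->
    monotonic_pos psi ->
    psi x @[x --> +oo] --> (0 : R) ->
    forall x0 y0 r : R, 0 < r -> r < 1 ->
      disc x0 y0 r `<=` [set p | eps <= p.1 <= 1 /\ eps <= p.2 <= 1] ->
      exists H0 : nat, forall a b : nat, (H0 <= hab a b)%N ->
        let h := (hab a b)%:R : R in
        ((c1 * psi h / h)%:E * leb2 (disc x0 y0 r)
           <= leb2 (sigma_ab psi a b `&` disc x0 y0 r))%E /\
        (leb2 (sigma_ab psi a b `&` disc x0 y0 r)
           <= (c2 * psi h / h)%:E * leb2 (disc x0 y0 r))%E /\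
        (forall c : nat, sigma_c psi a b c `&` disc x0 y0 r !=set0 ->
           eps / 2 * h < c%:R /\ c%:R < 2 * h).
Proof.
exists (1 / 32), (28 / eps); split; first lra.
split; first by rewrite divr_gt0.
move=> psi psi_gt0 _ psi_cvg0 x0 y0 r r0 r1 sub.
have [M [_ psi_small]] := (cvgrPdist_lt _ _).1 psi_cvg0 (1 / 4) ltac:(lra).
exists (Num.truncn (`|M| + 16 / r + 1 / eps)).+1 => a b Hab h.
have h0 : 0 < h by rewrite ltr0n (leq_ltn_trans _ Hab).
have Q0 : 0 <= `|M| + 16 / r + 1 / eps by rewrite !addr_ge0 ?divr_ge0 //; lra.
have [hM hr he] : [/\ M < h, 16 < h * r & 1 < h * eps].
  by apply: threshold_lt => //; rewrite /h -truncn_lt_nat.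
have p1 : psi h <= 1 / 4.
  by have := psi_small h hM; rewrite sub0r normrN ltr_norml => /andP[_ /ltW].
have [lb ub] := leb2_sigma_ab_disc_comparable eps_gt0 r0 r1 sub (psi_gt0 _ h0) p1
  (ltW hr) (ltW he).
do 2!split => //.
by move=> c; exact: sigma_c_disc_index_bounds eps_gt0 eps_lt1 sub p1 (ltW he).
Qed.
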